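(* Let $T$ be a tree. Then for every dominating set $S$ of $T$, $|a(S)|\le 2\Gamma(T)-|S|$.
   Context: A dominating set of a graph $G=(V,E)$ is a set $S\subseteq V$ such that every vertex is in $S$ or adjacent to a vertex of $S$; it is minimal if no proper subset is dominating. $\Gamma(T)$ is the maximum size of a minimal dominating set of $T$. For a dominating set $S$, $a(S)=\{v\in S: S\setminus\{v\}\text{ is not a dominating set}\}$. *)

From mathcomp Require Import all_boot.
Set Implicit Arguments. Unset Strict Implicit. Unset Printing Implicit Defensive.

Definition simple_graph (T : finType) (e : rel T) : Prop :=
  symmetric e /\ irreflexive e.

Definition edges (T : finType) (e : rel T) : {set {set T}} :=
  [set [set x; y] | x in T, y in T & e x y].

Definition connected_graph (T : finType) (e : rel T) : Prop :=
  forall x y : T, connect e x y.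

Definition is_tree (T : finType) (e : rel T) : Prop :=
  [/\ simple_graph e, 0 < #|T|, connected_graph e & #|edges e| = #|T| - 1].

Definition dominated (T : finType) (e : rel T) (S : {set T}) (v : T) : bool :=
  (v \in S) || [exists u in S, e u v].

Definition dominating (T : finType) (e : rel T) (S : {set T}) : bool :=
  [forall v, dominated e S v].

Definition minimal_dominating (T : finType) (e : rel T) (S : {set T}) : bool :=
  dominating e S && [forall S' : {set T}, (S' \proper S) ==> ~~ dominating e S'].

Definition Gamma (T : finType) (e : rel T) : nat :=
  \max_(S : {set T} | minimal_dominating e S) #|S|.

Definition aS (T : finType) (e : rel T) (S : {set T}) : {set T} :=
  [set v in S | ~~ dominating e (S :\ v)].

From mathcomp Require Import all_boot.
From mathcomp Require Import zify.
Set Implicit Arguments. Unset Strict Implicit. Unset Printing Implicit Defensive.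

(* A tree has a proper 2-colouring c.  Every v in a(S) has a private neighbour
   p v: either v itself, or a vertex outside S adjacent to v and to no other
   vertex of S; p is injective on a(S).  For each colour b, the vertices of S
   coloured b together with the p v for v in a(S) coloured ~~ b form an
   independent set, because a non-fixed p v has the colour opposite to v.  An
   independent set extends to a maximal one, which is a minimal dominating set,
   so |S_b| + |a(S)_(~~ b)| <= Gamma; summing over both colours gives the
   bound. *)

Section BreadthFirst.

Variables (T : finType) (e : rel T) (r : T).

Definition ball (n : nat) : {set T} :=
  iter n (fun A => A :|: [set y | [exists x in A, e x y]]) [set r].

Lemma ballS n : ball n.+1 = ball n :|: [set y | [exists x in ball n, e x y]].
Proof. by []. Qed.

Lemma last_path_in_ball p : path e r p -> last r p \in ball (size p).
Proof.
elim/last_ind: p => [|p y IHp]; first by rewrite set11.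
rewrite rcons_path last_rcons size_rcons ballS => /andP[/IHp last_in e_last_y].
rewrite !inE; apply/orP; right.
by apply/existsP; exists (last r p); rewrite last_in.
Qed.

Hypothesis reach : forall v, connect e r v.

Lemma ball_exists v : exists n, v \in ball n.
Proof.
have /connectP[p pth ->] := reach v.
by exists (size p); apply: last_path_in_ball.
Qed.

Definition dist (v : T) : nat := ex_minn (ball_exists v).

Lemma in_ball_dist v : v \in ball (dist v).
Proof. by rewrite /dist; case: ex_minnP. Qed.

Lemma dist_min v n : v \in ball n -> dist v <= n.
Proof. by rewrite /dist; case: ex_minnP => m _ min_m /min_m. Qed.

Lemma dist_edge x y : e x y -> dist y <= (dist x).+1.
Proof.
move=> exy; apply: dist_min; rewrite ballS !inE; apply/orP; right.
by apply/existsP; exists x; rewrite in_ball_dist.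
Qed.

Lemma dist_parent v : v != r -> exists2 w, e w v & (dist w).+1 = dist v.
Proof.
move=> vr; have := in_ball_dist v.
case Edv: (dist v) => [|n]; first by rewrite /= inE (negbTE vr).
rewrite ballS !inE => /orP[v_in | /existsP[w /andP[w_in ewv]]].
  by have := dist_min v_in; rewrite Edv ltnn.
exists w => //; have := dist_min w_in; have := dist_edge ewv; rewrite Edv; lia.
Qed.

End BreadthFirst.

Lemma set2_swap (T : finType) (x y u v : T) :
  [set x; y] = [set u; v] -> x != u -> x = v /\ y = u.
Proof.
move=> Exy xu; split.
  by have := set21 x y; rewrite Exy !inE (negbTE xu) => /eqP.
by have := set21 u v; rewrite -Exy !inE eq_sym (negbTE xu) => /eqP.
Qed.

(* Every edge of a tree joins a vertex to its parent in a breadth-first search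
   tree: the parent edges are |T| - 1 distinct edges, hence all of them. *)
Lemma tree_bipartite (T : finType) (e : rel T) :
  is_tree e -> exists c : T -> bool, forall x y, e x y -> c x != c y.
Proof.
case=> [[esym eirr] T_gt0 conn card_edges].
have [r _] := card_gt0P T_gt0.
pose d := dist (conn r).
pose par v := odflt v [pick w | e w v && ((d w).+1 == d v)].
have parP v : v != r -> e (par v) v /\ (d (par v)).+1 = d v.
  move=> vr; rewrite /par; case: pickP => [w /andP[ewv /eqP] // | none].
  by have [w ewv dw] := dist_parent (conn r) vr; have := none w; rewrite ewv dw eqxx.
pose parent_edge v := [set v; par v].
have parent_edge_inj : {in [set~ r] &, injective parent_edge}.
  move=> v w; rewrite !inE => vr wr Evw; case: (eqVneq v w) => // vw; exfalso.
  have [v_par w_par] := set2_swap Evw vw.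
  have [_ dv] := parP v vr; have [_ dw] := parP w wr.
  by move: dv dw; rewrite w_par -v_par; lia.
have parent_edges : parent_edge @: [set~ r] = edges e.
  apply/eqP; rewrite eqEcard card_in_imset // cardsC1 card_edges subn1 leqnn andbT.
  apply/subsetP => E /imsetP[v]; rewrite !inE => vr ->.
  by apply/imset2P; exists v (par v); rewrite // inE esym; case: (parP v vr).
exists (fun v => odd (d v)) => x y exy.
have : [set x; y] \in edges e by apply/imset2P; exists x y => //; rewrite inE.
rewrite -parent_edges => /imsetP[v]; rewrite !inE => vr Exy.
have parity : odd (d v) != odd (d (par v)).
  by case: (parP v vr) => _ <-; rewrite oddS; case: (odd _).
have xy : x != y by apply: contraTneq exy => ->; rewrite eirr.
have [xv|xv] := eqVneq x v.
  have yv : y != v by rewrite -xv eq_sym.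
  have [y_par _] := set2_swap (etrans (setUC _ _) Exy) yv.
  by rewrite xv y_par.
by have [-> ->] := set2_swap Exy xv; rewrite eq_sym.
Qed.

Section Domination.

Variables (T : finType) (e : rel T).
Hypotheses (esym : symmetric e) (eirr : irreflexive e).

Definition independent (M : {set T}) : bool :=
  [forall x in M, forall y in M, ~~ e x y].

Lemma independentP (M : {set T}) :
  reflect {in M &, forall x y, ~~ e x y} (independent M).
Proof.
apply: (iffP forall_inP) => [indM x y xM yM | indM x xM].
  by move/forall_inP: (indM x xM); apply.
by apply/forall_inP => y; apply: indM.
Qed.

Lemma independentU (A B : {set T}) :
  independent A -> independent B -> {in A & B, forall x y, ~~ e x y} ->
  independent (A :|: B).
Proof.
move=> /independentP indA /independentP indB AB; apply/independentP.
move=> x y; rewrite !inE => /orP[xA|xB] /orP[yA|yB]; auto.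
by rewrite esym; apply: AB.
Qed.

Lemma maximal_independent_minimal_dominating (M : {set T}) :
  maxset independent M -> minimal_dominating e M.
Proof.
move=> /maxsetP[/independentP indM maxM]; apply/andP; split.
  apply/forallP => v; rewrite /dominated; apply/norP => -[vM /existsPn undom].
  have indvM : independent (v |: M).
    apply/independentP => x y; rewrite !inE.
    have nadj u : u \in M -> ~~ e u v by move=> uM; have := undom u; rewrite uM.
    move=> /orP[/eqP->|xM] /orP[/eqP->|yM]; rewrite ?eirr ?nadj //.
      by rewrite esym nadj.
    exact: indM.
  by move: vM; rewrite -(maxM _ indvM (subsetUr _ _)) setU11.
apply/forall_inP => S' /properP[S'M [v vM vS']].
apply/negP => /forallP/(_ v); rewrite /dominated (negbTE vS').
by case/exists_inP => u /(subsetP S'M) uM; apply/negP/indM.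
Qed.

Lemma independent_le_Gamma (M : {set T}) : independent M -> #|M| <= Gamma e.
Proof.
move=> indM; have [N maxN MN] := maxset_exists indM.
apply: leq_trans (subset_leq_card MN) _.
rewrite /Gamma (bigD1 N) ?leq_maxl //.
exact: maximal_independent_minimal_dominating.
Qed.

End Domination.

Section PrivateNeighbours.

Variables (T : finType) (e : rel T) (S : {set T}).
Hypothesis domS : dominating e S.

(* The default [v] is only reached when [v \notin aS e S]. *)
Definition private_nbr (v : T) : T :=
  odflt v [pick u | ~~ dominated e (S :\ v) u].

Lemma private_nbrP v : v \in aS e S -> ~~ dominated e (S :\ v) (private_nbr v).
Proof.
rewrite inE => /andP[_ /forallPn[u undom]].
by rewrite /private_nbr; case: pickP => [// | none]; have := none u; rewrite undom.
Qed.

Lemma private_nbr_nonadj v s :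
  v \in aS e S -> s \in S -> s != v -> ~~ e s (private_nbr v).
Proof.
move=> vA sS sv; apply: contra (private_nbrP vA) => es.
by apply/orP; right; apply/exists_inP; exists s; rewrite // !inE sv.
Qed.

Lemma private_nbr_cases v : v \in aS e S ->
  private_nbr v = v \/ private_nbr v \notin S /\ e v (private_nbr v).
Proof.
move=> vA; have [-> | pv] := eqVneq (private_nbr v) v; [by left | right].
have := private_nbrP vA; rewrite /dominated !inE pv /= negb_or => /andP[pS _].
move/forallP: domS => /(_ (private_nbr v)) /orP[pS' | /exists_inP[s sS es]].
  by rewrite pS' in pS.
have [sv | sv] := eqVneq s v.
  by split => //; rewrite sv in es.
by rewrite (negbTE (private_nbr_nonadj vA sS sv)) in es.
Qed.

Lemma private_nbr_inj : {in aS e S &, injective private_nbr}.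
Proof.
move=> v w vA wA Epvw; case: (eqVneq v w) => // vw; exfalso.
have wS : w \in S by move: wA; rewrite inE => /andP[].
have [pw | [_ ewp]] := private_nbr_cases wA.
  by have := private_nbrP vA; rewrite /dominated !inE Epvw pw eq_sym vw wS.
by have := private_nbr_nonadj vA wS; rewrite eq_sym vw Epvw ewp => /(_ isT).
Qed.

End PrivateNeighbours.

Section ColourClasses.

Variables (T : finType) (e : rel T) (S : {set T}) (c : T -> bool).
Hypotheses (esym : symmetric e) (eirr : irreflexive e) (domS : dominating e S).
Hypothesis c_proper : forall x y, e x y -> c x != c y.

Lemma card_colour_classes (A : {set T}) b :
  #|[set x in A | c x == b]| + #|[set x in A | c x == ~~ b]| = #|A|.
Proof.
rewrite -(cardsID [set x | c x == b] A); congr (_ + _); apply: eq_card => x;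
  by rewrite !inE; case: (c x); case: b; rewrite ?andbT ?andbF.
Qed.

Lemma colour_class_independent (A : {set T}) b :
  independent e [set x in A | c x == b].
Proof.
apply/independentP => x y; rewrite !inE => /andP[_ /eqP cx] /andP[_ /eqP cy].
by apply/negP => /c_proper; rewrite cx cy eqxx.
Qed.

Local Notation pn := (private_nbr e S).
Local Notation A_ b := [set v in aS e S | c v == ~~ b].

Lemma colour_private_nbr b v : v \in A_ b -> pn v != v -> c (pn v) = b.
Proof.
rewrite inE => /andP[vA /eqP cv] pv.
have [/eqP | [_ evp]] := private_nbr_cases domS vA; first by rewrite (negbTE pv).
by move: (c_proper evp); rewrite cv => {cv}; case: b; case: (c (pn v)).
Qed.

Lemma private_image_independent b : independent e (pn @: A_ b).
Proof.
apply/independentP => _ _ /imsetP[w wA ->] /imsetP[v vA ->].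
have [vAS wAS] : v \in aS e S /\ w \in aS e S.
  by move: vA wA; rewrite !inE => /andP[-> _] /andP[-> _].
have inS u : u \in aS e S -> u \in S by rewrite inE => /andP[].
have [<- | wv] := eqVneq w v; first by rewrite eirr.
have [pw | pw] := eqVneq (pn w) w; first by rewrite pw private_nbr_nonadj ?inS.
have [pv | pv] := eqVneq (pn v) v.
  by rewrite pv esym private_nbr_nonadj ?inS // eq_sym.
apply/negP => /c_proper.
by rewrite (colour_private_nbr wA) ?(colour_private_nbr vA) ?eqxx.
Qed.

Lemma colour_class_private_image_nonadj b :
  {in [set x in S | c x == b] & pn @: A_ b, forall x y, ~~ e x y}.
Proof.
move=> x y; rewrite inE => /andP[xS /eqP cx] /imsetP[v vA ->].
apply: private_nbr_nonadj xS _; first by move: vA; rewrite inE => /andP[].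
by apply: contraTneq vA => <-; rewrite inE cx; case: b {cx}; rewrite andbF.
Qed.

Lemma private_image_disjoint b : [set x in S | c x == b] :&: pn @: A_ b = set0.
Proof.
apply/setP => p; rewrite !inE; apply/negP => /andP[/andP[pS cp] /imsetP[v vA Ep]].
have vAS : v \in aS e S by move: vA; rewrite inE => /andP[].
have [pv | [pnS _]] := private_nbr_cases domS vAS; last by rewrite -Ep pS in pnS.
by move: vA cp; rewrite inE Ep pv => /andP[_ /eqP ->]; case: b.
Qed.

Lemma card_colour_class_aS_le_Gamma b :
  #|[set x in S | c x == b]| + #|A_ b| <= Gamma e.
Proof.
have <- : #|pn @: A_ b| = #|A_ b|.
  apply: card_in_imset => v w /setIdP[vA _] /setIdP[wA _].
  exact: private_nbr_inj.
rewrite -cardsUI private_image_disjoint cards0 addn0.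
apply: (independent_le_Gamma esym eirr).
apply: independentU; rewrite ?colour_class_independent ?private_image_independent //.
exact: colour_class_private_image_nonadj.
Qed.

End ColourClasses.

Theorem lemma4p10 (T : finType) (e : rel T) :
  is_tree e ->
  forall S : {set T}, dominating e S ->
  #|aS e S| + #|S| <= 2 * Gamma e.
Proof.
move=> tree S domS.
have [c c_proper] := tree_bipartite tree.
have [[esym eirr] _ _ _] := tree.
have bound b := card_colour_class_aS_le_Gamma esym eirr domS c_proper b.
have := bound true; have := bound false.
rewrite -(card_colour_classes c S true) -(card_colour_classes c (aS e S) true) /=.
lia.
Qed.
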